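(* For every integer $\ell\ge 0$ and every $\mathbf z=(z_1,\dots,z_{K-1})\in[0,1]^{K-1}$, $$G_\ell(z_1,\dots,z_{K-1})=(1-r)\,\zeta_-(z_1,\dots,z_{K-1})^{\ell}\prod_{\kappa=1}^{K-1}\frac{1-z_\kappa\,\zeta_-(z_1,\dots,z_\kappa)}{1-z_\kappa\,\zeta_-(z_1,\dots,z_{\kappa-1})},$$ and all denominators in this product are strictly positive on $[0,1]^{K-1}$. In particular $P(\mathbf 0)=G_0(0,\dots,0)=1-r$ and $G_\ell=G_0\cdot\zeta_-(z_1,\dots,z_{K-1})^\ell$.
   Context: Fix integers $c\ge 1$, $K\ge 2$ and reals $r_1,\dots,r_K>0$ with $r=\sum_{k=1}^K r_k<1$ (here $r_k=\lambda_k/(c\mu)$ for an M/M/$c$ queue with $K$ non-preemptive priority levels, level 1 the highest, Poisson arrival rates $\lambda_k$ and common exponential service rate $\mu$). Write $\sigma_k=\sum_{j=1}^k r_j$ ($\sigma_0=0$, $\sigma_K=r$), $\mathbf e_\kappa$ for the standard unit vectors of $\mathbb Z^K$, $\delta_{ij}$ for the Kronecker delta. Consider the equations for $(p_{\mathbf n})_{\mathbf n\in\mathbb N_0^K}$, with the convention $p_{\mathbf n}=0$ if some component of $\mathbf n$ is negative: $$(1+r)p_{\mathbf n}=\Big(\prod_{j=1}^K\delta_{0n_j}\Big)p_{\mathbf n}+\sum_{\kappa=1}^K\Big[r_\kappa p_{\mathbf n-\mathbf e_\kappa}+\Big(\prod_{j=1}^{\kappa-1}\delta_{0n_j}\Big)p_{\mathbf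 n+\mathbf e_\kappa}\Big],\quad \mathbf n\in\mathbb N_0^K .$$ These are the stationary balance equations for the states in which all $c$ servers are busy and $n_\kappa$ clients of level $\kappa$ wait in the queue; their nonnegative summable solutions form a one-dimensional cone, and $P$ denotes the unique solution with $\sum_{\mathbf n}P(\mathbf n)=1$ (the joint queue-length distribution conditional on all servers busy). For $\kappa=0,1,\dots,K-1$ and $z_1,\dots,z_\kappa\in[0,1]$ define $\beta(z_1,\dots,z_\kappa)=\sum_{k=1}^\kappa z_k r_{K+1-k}$ (so $\beta()=0$) and $$\zeta_\pm(z_1,\dots,z_\kappa)=\tfrac12\Big[1+r-\beta\pm\sqrt{(1+r-\beta)^2-4\sigma_{K-\kappa}}\Big],\quad \beta=\beta(z_1,\dots,z_\kappa),$$ the two real roots of $\zeta^2-(1+r-\beta)\zeta+\sigma_{K-\kappa}=0$ (the discriminant is positive there); in particular $\zeta_+()=1$, $\zeta_-()=r$. For $\ell\ge0$ define the generating function $$G_\ell(z_1,\dots,z_{K-1})=\sum_{n_2,\dots,n_K\ge0}P(\ell,n_2,\dots,n_K)\prod_{j=2}^K z_{K+1-j}^{\,n_j},$$ so $z_1$ is paired with the lowest level $K$ and $z_{K-1}$ with level $2$. *)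

From HB Require Import structures.
From mathcomp Require Import all_boot all_order all_algebra.
From mathcomp Require Import all_classical all_reals.
From mathcomp Require Import ereal esum.
Set Implicit Arguments. Unset Strict Implicit. Unset Printing Implicit Defensive.
Import Order.TTheory GRing.Theory Num.Theory.
Local Open Scope ring_scope.

(* Conventions: priority levels are 1..K.  The rates r_k are given as a
   function r : nat -> R, read at k = 1..K.  The variables z_1..z_{K-1} are
   given as z : nat -> R, read at k = 1..K-1.  A queue state
   n = (n_1,..,n_K) is an element of {ffun 'I_K -> nat}, where the ordinal i
   stands for the level i+1. *)

Section QueueDefs.
Variable R : realType.

Definition sigma (r : nat -> R) (k : nat) : R := \sum_(1 <= j < k.+1) r j.

Definition beta (K : nat) (r z : nat -> R) (kappa : nat) : R :=
  \sum_(1 <= k < kappa.+1) z k * r (K.+1 - k)%N.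

Definition zeta_minus (K : nat) (r z : nat -> R) (kappa : nat) : R :=
  let b := beta K r z kappa in
  (1 + sigma r K - b
     - Num.sqrt ((1 + sigma r K - b) ^+ 2 - 4 * sigma r (K - kappa)%N)) / 2.

Definition state (K : nat) := {ffun 'I_K -> nat}.

(* n - e_i and n + e_i (the first only used when n_i > 0) *)
Definition dec_st (K : nat) (n : state K) (i : 'I_K) : state K :=
  [ffun j => if j == i then (n j).-1 else n j].
Definition inc_st (K : nat) (n : state K) (i : 'I_K) : state K :=
  [ffun j => if j == i then (n j).+1 else n j].

(* The balance equations, with the convention p_{n} = 0 if some component
   of n is negative. Ordinal i corresponds to level kappa = i+1, so the
   product over j = 1..kappa-1 of delta_{0 n_j} is the condition that n_j = 0
   for all ordinals j < i. *)
Definition balance (K : nat) (r : nat -> R) (p : state K -> R) : Prop :=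
  forall n : state K,
    (1 + sigma r K) * p n =
      (if [forall j : 'I_K, n j == 0%N] then p n else 0)
      + \sum_(i < K)
          (r i.+1 * (if (0 < n i)%N then p (dec_st n i) else 0)
           + (if [forall j : 'I_K, (j < i)%N ==> (n j == 0%N)]
              then p (inc_st n i) else 0)).

(* G_ell(z_1..z_{K-1}) = sum over n with n_1 = ell of
   p(n) prod_{j=2}^K z_{K+1-j}^{n_j}; ordinal i (level i+1) pairs with
   z_{K-i}. Sum of nonnegative terms, taken in the extended reals. *)
Definition G (K : nat) (z : nat -> R) (p : state K -> R) (ell : nat) : \bar R :=
  (\esum_(n in [set n : state K | forall i : 'I_K, val i = 0%N -> n i = ell])
     (p n * \prod_(i < K | (1 <= i)%N) z (K - i)%N ^+ n i)%:E)%E.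

End QueueDefs.

From HB Require Import structures.
From mathcomp Require Import all_boot all_order all_algebra.
From mathcomp Require Import all_classical all_reals.
From mathcomp Require Import ereal esum.
From mathcomp Require Import topology normedtype sequences.
From mathcomp Require Import ring lra zify.
Set Implicit Arguments. Unset Strict Implicit. Unset Printing Implicit Defensive.
Import Order.TTheory GRing.Theory Num.Theory.
Local Open Scope ring_scope.

(* For 1 <= j <= K let H j m be the sum of p n times the generating weight of
   the levels j+1..K over the states n with m clients at the levels 1..j; thus
   H 1 = G.  For m >= 1 the balance equations give a second-order linear
   recurrence for H j whose characteristic roots are
   zeta_-(z_1..z_(K-j)) <= sigma_j < 1 <= zeta_+, and summability forces
   H j m = H j 0 * zeta_-^m.  Summing H j and H (j+1) against z_(K-j)^m gives
   the same series, which relates H j 0 to H (j+1) 0; at j = K there is no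
   z-weight left and normalisation gives H K 0 = 1 - sigma_K.  Telescoping from K
   down to 1 yields the product formula. *)

Section NonnegativeSums.
Context {R : realType} {T : choiceType}.
Local Open Scope ereal_scope.
Local Open Scope classical_set_scope.
Implicit Types (I J : set T) (a : T -> \bar R).

Lemma esumZl I a (c : R) : (0 <= c)%R -> (forall x, 0 <= a x) ->
  \esum_(x in I) (c%:E * a x) = c%:E * \esum_(x in I) a x.
Proof.
move=> c0 a0; rewrite /esum -ereal_supZl //; last first.
  by apply/set0P; exists 0, set0; [exact: fsets_set0 | rewrite fsbig_set0].
congr ereal_sup; apply/seteqP; split => y /=.
- move=> [A [finA AI] <-]; exists (\sum_(x \in A) a x); first by exists A.
  by rewrite !fsbig_finite //= ge0_sume_distrr.
- move=> [_ [A [finA AI] <-] <-]; exists A => //.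
  by rewrite !fsbig_finite //= ge0_sume_distrr.
Qed.

Lemma ge0_subset_esum I J a : I `<=` J -> (forall x, 0 <= a x) ->
  \esum_(x in I) a x <= \esum_(x in J) a x.
Proof.
move=> IJ a0; rewrite (esum_mkcond I) (esum_mkcond J); apply: le_esum => x _.
by case: ifPn => [/set_mem/IJ/mem_set -> //|_]; case: ifP.
Qed.

Lemma esum_setI_supp I J a : (forall x, I x -> ~ J x -> a x = 0) ->
  \esum_(x in I `&` J) a x = \esum_(x in I) a x.
Proof.
move=> out; rewrite esum_mkcondr; apply: eq_esum => x Ix.
by case: (boolP (x \in J)) => // /negP xJ; rewrite out // => /mem_set.
Qed.

Lemma esum_fibersT a (g : T -> nat) : (forall x, 0 <= a x) ->
  \esum_(x in [set: T]) a x = \sum_(m <oo) \esum_(x in [set x | g x = m]) a x.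
Proof.
move=> a0; rewrite nneseries_esumT => [|m]; last exact: esum_ge0.
rewrite -esum_bigcupT //; last by move=> i j _ _ [x [/= <- <-]].
by congr esum; apply/seteqP; split => x // _; exists (g x).
Qed.

End NonnegativeSums.

Lemma eseries_geometric (R : realType) (c q : R) : 0 <= q < 1 ->
  (\sum_(k <oo) (c * q ^+ k)%:E = (c / (1 - q))%:E)%E.
Proof.
move=> /andP[q0 q1]; have qlt1 : `|q| < 1 by rewrite ger0_norm.
rewrite (_ : (fun n => _) = EFin \o series (geometric c q)); last first.
  by apply/funext => n /=; rewrite /series /= -sumEFin.
rewrite EFin_lim; last exact: is_cvg_geometric_series.
have /(@cvg_unique _ (@Rhausdorff R)) := @cvg_geometric_series R c q qlt1.
by move/(_ _ (@is_cvg_geometric_series _ c _ qlt1)) => ->.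
Qed.

Section SecondOrderRecurrence.
Variable R : realType.

Lemma bounded_geometric_sums_eq0 (c v B : R) : 1 <= v ->
  (forall N, `|\sum_(k < N) c * v ^+ k| <= B) -> c = 0.
Proof.
move=> v1 bounded; apply/eqP; apply: contraT => c_neq0.
have c_gt0 : 0 < `|c| by rewrite normr_gt0.
have B_ge0 : 0 <= B by have := bounded 0%N; rewrite big_ord0 normr0.
pose N := Num.bound (B / `|c|).
have NB : B < `|c| * N%:R.
  by rewrite mulrC -ltr_pdivrMr // archi_boundP // divr_ge0.
have sumN : N%:R <= \sum_(k < N) v ^+ k.
  rewrite -[N in N%:R]card_ord -sumr_const.
  by apply: ler_sum => k _; apply: exprn_ege1.
have sum_ge0 : 0 <= \sum_(k < N) v ^+ k.
  by apply: sumr_ge0 => k _; apply: exprn_ge0; lra.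
have := bounded N; rewrite -mulr_sumr normrM (ger0_norm sum_ge0).
have := ler_wpM2l (ltW c_gt0) sumN; lra.
Qed.

(* The first difference d n = l n.+1 - u l n satisfies d n = v ^ n d 0; bounded
   partial sums of l rule out the growing mode. *)
Lemma linrec2_bounded_geometric (u v B : R) (l : nat -> R) :
  0 <= u -> 1 <= v -> (forall n, 0 <= l n) ->
  (forall N, \sum_(k < N) l k <= B) ->
  (forall n, l n.+2 = (u + v) * l n.+1 - u * v * l n) ->
  forall n, l n = l 0%N * u ^+ n.
Proof.
move=> u0 v1 l0 lB lrec.
pose d n := l n.+1 - u * l n.
have d_geom n : d n = d 0%N * v ^+ n.
  elim: n => [|n IH]; first by rewrite mulr1.
  by rewrite exprS mulrCA -IH /d lrec; ring.
have d0 : d 0%N = 0.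
  apply: (@bounded_geometric_sums_eq0 _ v (B + u * B)) => // N.
  under eq_bigr do rewrite -d_geom.
  have shifted : \sum_(k < N) l k.+1 <= B.
    by have := lB N.+1; rewrite big_ord_recl; have := l0 0%N; lra.
  have shifted_ge0 : 0 <= \sum_(k < N) l k.+1 by apply: sumr_ge0.
  have sum_ge0 : 0 <= \sum_(k < N) l k by apply: sumr_ge0.
  have := ler_wpM2l u0 (lB N); have := mulr_ge0 u0 sum_ge0.
  by rewrite /d sumrB -mulr_sumr ler_norml; lra.
elim=> [|n IH]; first by rewrite mulr1.
by have := d_geom n; rewrite d0 mul0r /d IH exprS => /eqP; rewrite subr_eq0 => /eqP ->; ring.
Qed.

End SecondOrderRecurrence.

Section QuadraticRoots.
Variable R : rcfType.
Implicit Types a s : R.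

Definition small_root a s := (a - Num.sqrt (a ^+ 2 - 4 * s)) / 2.
Definition large_root a s := (a + Num.sqrt (a ^+ 2 - 4 * s)) / 2.

Lemma small_rootD a s : small_root a s + large_root a s = a.
Proof. by rewrite /small_root /large_root; field. Qed.

Lemma sqr_sqrt_discr a s : 0 <= s -> 1 + s <= a ->
  Num.sqrt (a ^+ 2 - 4 * s) ^+ 2 = a ^+ 2 - 4 * s.
Proof. by move=> s0 sa; rewrite sqr_sqrtr //; have := sqr_ge0 (1 - s); nra. Qed.

Lemma small_rootM a s : 0 <= s -> 1 + s <= a -> small_root a s * large_root a s = s.
Proof.
move=> s0 sa; rewrite /small_root /large_root.
have -> : (a - Num.sqrt (a ^+ 2 - 4 * s)) / 2 * ((a + Num.sqrt (a ^+ 2 - 4 * s)) / 2) =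
  (a ^+ 2 - Num.sqrt (a ^+ 2 - 4 * s) ^+ 2) / 4 by field.
by rewrite sqr_sqrt_discr //; field.
Qed.

Lemma large_root_ge1 a s : 0 <= s -> 1 + s <= a -> 1 <= large_root a s.
Proof.
move=> s0 sa; have := sqrtr_ge0 (a ^+ 2 - 4 * s); have := sqr_sqrt_discr s0 sa.
rewrite /large_root; set q := Num.sqrt _ => q2 q0.
have : 2 - a <= q by nra.
lra.
Qed.

Lemma small_root_bounds a s : 0 <= s -> 1 + s <= a -> 0 <= small_root a s <= s.
Proof.
move=> s0 sa; have := sqrtr_ge0 (a ^+ 2 - 4 * s); have := sqr_sqrt_discr s0 sa.
have := small_rootM s0 sa; rewrite /small_root /large_root.
set q := Num.sqrt _ => m q2 q0.
apply/andP; split; nra.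
Qed.

End QuadraticRoots.

Section States.
Variable K : nat.
Implicit Types (n : state K) (i : 'I_K).

Definition queued_upto (j : nat) n : nat := (\sum_(i < K | (i < j)%N) n i)%N.

Lemma inc_st_eq n i : inc_st n i i = (n i).+1.
Proof. by rewrite ffunE eqxx. Qed.

Lemma inc_st_neq n i k : k != i -> inc_st n i k = n k.
Proof. by rewrite ffunE => /negPf ->. Qed.

Lemma inc_stK i : cancel (fun n => inc_st n i) (fun n => dec_st n i).
Proof.
by move=> n; apply/ffunP => k; rewrite !ffunE; case: eqP => // ->; rewrite inc_st_eq.
Qed.

Lemma dec_stK n i : (0 < n i)%N -> inc_st (dec_st n i) i = n.
Proof. by move=> ni; apply/ffunP => k; rewrite !ffunE; case: eqP => // ->; rewrite prednK. Qed.

Lemma inc_st_bij (A B : set (state K)) i :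
  (forall n, A n -> B (inc_st n i)) ->
  (forall n, B n -> (0 < n i)%N /\ A (dec_st n i)) ->
  set_bij A B (fun n => inc_st n i).
Proof.
move=> AB BA; split => [n /AB //|n1 n2 _ _|n /BA [ni An]].
  exact: (can_inj (inc_stK i)).
by exists (dec_st n i) => //; rewrite dec_stK.
Qed.

Lemma queued_upto_inc j n i :
  queued_upto j (inc_st n i) = (queued_upto j n + (i < j))%N.
Proof.
rewrite /queued_upto; case: ltnP => ij; last first.
  rewrite addn0; apply: eq_bigr => k kj; rewrite inc_st_neq //.
  by apply: contraTneq kj => ->; rewrite -leqNgt.
rewrite (bigD1 i) //= [in RHS](bigD1 i) //= inc_st_eq addn1 addSn.
by congr (_.+1 + _)%N; apply: eq_bigr => k /andP[_ ki]; exact: inc_st_neq.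
Qed.

Lemma queued_upto_dec j n i : (0 < n i)%N ->
  queued_upto j (dec_st n i) = (queued_upto j n - (i < j))%N.
Proof. by move=> ni; rewrite -{2}(dec_stK ni) queued_upto_inc addnK. Qed.

Lemma queued_uptoS j (jK : (j < K)%N) n :
  queued_upto j.+1 n = (n (Ordinal jK) + queued_upto j n)%N.
Proof.
rewrite /queued_upto (bigD1 (Ordinal jK)) //=; congr (_ + _)%N.
by apply: eq_bigl => i; rewrite ltnS leq_eqVlt -val_eqE /=; case: ltngtP.
Qed.

Lemma queued_upto_eq0 j n :
  (queued_upto j n == 0%N) = [forall k : 'I_K, (k < j)%N ==> (n k == 0%N)].
Proof. by rewrite /queued_upto sum_nat_eq0. Qed.

Definition first_nonempty (j : nat) i n : bool :=
  [&& (i < j)%N, (0 < n i)%N & [forall k : 'I_K, (k < i)%N ==> (n k == 0%N)]].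

Lemma first_nonempty_unique j n : (0 < queued_upto j n)%N ->
  exists i0, forall i, first_nonempty j i n = (i == i0).
Proof.
rewrite lt0n queued_upto_eq0 => /forallPn[i1]; rewrite negb_imply => Pi1.
case: (@arg_minnP _ i1 (fun i => (i < j)%N && (n i != 0%N)) val Pi1).
move=> i0 /andP[i0j ni0] i0_min; exists i0 => i.
apply/idP/eqP => [/and3P[ij ni /forallP below]|->].
  apply/val_inj/eqP; rewrite eqn_leq i0_min ?ij -?lt0n //=.
  by rewrite andbT leqNgt; apply: contraNN ni0; apply/implyP.
rewrite /first_nonempty i0j lt0n ni0; apply/forallP => k; apply/implyP => ki0.
by apply: contraTT (ki0) => nk; rewrite -leqNgt; apply: i0_min; rewrite (ltn_trans ki0).
Qed.

Lemma first_nonempty_inc j i n : first_nonempty j i (inc_st n i) =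
  (i < j)%N && [forall k : 'I_K, (k < i)%N ==> (n k == 0%N)].
Proof.
rewrite /first_nonempty inc_st_eq /=; congr (_ && _); apply: eq_forallb => k.
by case: (ltnP k i) => //= ki; rewrite inc_st_neq // -val_eqE /= ltn_eqF.
Qed.

End States.

Section RateSums.
Variables (R : realType) (K : nat) (r z : nat -> R).

Lemma sigmaE j : sigma r j = \sum_(i < j) r i.+1.
Proof. by rewrite /sigma big_add1 big_mkord. Qed.

Lemma betaE j : (j <= K)%N ->
  beta K r z (K - j) = \sum_(j <= i < K) z (K - i)%N * r i.+1.
Proof.
move=> jK; rewrite /beta big_add1 [LHS]big_nat_rev -[in RHS](add0n j) big_addn /=.
by apply: eq_big_nat => i /andP[_ iK]; congr (z _ * r _); lia.
Qed.

Lemma sum_levels_split j x0 x1 : (j <= K)%N ->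
  \sum_(i < K) r i.+1 * (if (i < j)%N then x0 else z (K - i)%N * x1) =
  sigma r j * x0 + beta K r z (K - j) * x1.
Proof.
move=> jK; rewrite (bigID (fun i : 'I_K => (i < j)%N)) /= (big_ord_narrow jK).
rewrite sigmaE betaE // big_geq_mkord !mulr_suml; congr (_ + _).
  by apply: eq_bigr => i _; rewrite /= ltn_ord.
by apply: eq_big => [i|i /negbTE ->]; [rewrite -leqNgt | rewrite mulrCA mulrA].
Qed.

End RateSums.

Section Queue.
Local Open Scope classical_set_scope.
Variables (R : realType) (K : nat) (r : nat -> R) (p : state K -> R) (z : nat -> R).
Hypothesis K_gt0 : (0 < K)%N.
Hypothesis r_gt0 : forall k, (1 <= k <= K)%N -> 0 < r k.
Hypothesis sigma_lt1 : sigma r K < 1.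
Hypothesis p_ge0 : forall n, 0 <= p n.
Hypothesis p_sum1 : (\esum_(n in [set: state K]) (p n)%:E)%E = 1%E.
Hypothesis p_balance : balance r p.
Hypothesis z_bounds : forall k, (1 <= k <= K.-1)%N -> 0 <= z k <= 1.

Definition low_weight (j : nat) (n : state K) : R :=
  \prod_(i < K | (j <= i)%N) z (K - i)%N ^+ n i.

Definition weighted_prob (j : nat) (n : state K) : \bar R := (p n * low_weight j n)%:E.

Definition H (j m : nat) : \bar R :=
  (\esum_(n in [set n | queued_upto j n = m]) weighted_prob j n)%E.

Definition h (j m : nat) : R := fine (H j m).

Lemma r_ge0 (i : 'I_K) : 0 <= r i.+1.
Proof. by apply/ltW/r_gt0; rewrite ltn_ord. Qed.

Lemma z_low_bounds j (i : 'I_K) : (1 <= j <= i)%N -> 0 <= z (K - i)%N <= 1.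
Proof. by move=> ji; apply: z_bounds; have := ltn_ord i; lia. Qed.

Lemma low_weight_ge0 j n : (0 < j)%N -> 0 <= low_weight j n.
Proof.
move=> j0; apply: prodr_ge0 => i ji; apply: exprn_ge0.
by have /andP[] : 0 <= z (K - i)%N <= 1 by apply: (@z_low_bounds j); rewrite j0.
Qed.

Lemma low_weight_le1 j n : (0 < j)%N -> low_weight j n <= 1.
Proof.
move=> j0; apply: prodr_ile1 => i ji.
have /andP[z0 z1] : 0 <= z (K - i)%N <= 1 by apply: (@z_low_bounds j); rewrite j0.
by rewrite exprn_ge0 // exprn_ile1.
Qed.

Lemma weighted_prob_ge0 j n : (0 < j)%N -> (0 <= weighted_prob j n)%E.
Proof. by move=> j0; rewrite lee_fin mulr_ge0 // low_weight_ge0. Qed.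

Lemma esum_weighted_prob_le1 j (S : set (state K)) : (0 < j)%N ->
  (\esum_(n in S) weighted_prob j n <= 1)%E.
Proof.
move=> j0; rewrite -p_sum1; apply: (@le_trans _ _ (\esum_(n in S) (p n)%:E)%E).
  by apply: le_esum => n _; rewrite lee_fin ler_piMr // low_weight_le1.
by apply: ge0_subset_esum => // n; rewrite lee_fin.
Qed.

Lemma H_ge0 j m : (0 < j)%N -> (0 <= H j m)%E.
Proof. by move=> j0; apply: esum_ge0 => n _; apply: weighted_prob_ge0. Qed.

Lemma H_fin j m : (0 < j)%N -> H j m = (h j m)%:E.
Proof.
move=> j0; rewrite fineK //; apply/fin_numPlt/andP; split.
  by apply: lt_le_trans (H_ge0 m j0); rewrite ltNye.
by apply: le_lt_trans (esum_weighted_prob_le1 _ j0) _; rewrite ltey.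
Qed.

Lemma h_ge0 j m : (0 < j)%N -> 0 <= h j m.
Proof. by move=> j0; rewrite fine_ge0 // H_ge0. Qed.

Lemma sum_h_le1 j N : (0 < j)%N -> \sum_(k < N) h j k <= 1.
Proof.
move=> j0; rewrite -lee_fin -sumEFin.
under eq_bigr do rewrite -H_fin //.
apply: le_trans (esum_weighted_prob_le1 setT j0).
rewrite (esum_fibersT (queued_upto j)); last by move=> n; apply: weighted_prob_ge0.
have := @nneseries_lim_ge R (H j) xpredT 0%N N (fun k _ _ => H_ge0 k j0).
by rewrite big_mkord.
Qed.

Lemma low_weight_inc j n i : low_weight j (inc_st n i) =
  (if (j <= i)%N then z (K - i)%N else 1) * low_weight j n.
Proof.
rewrite /low_weight; case: ifP => ji; last first.
  rewrite mul1r; apply: eq_bigr => k jk; rewrite inc_st_neq //.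
  by apply: contraTneq jk => ->; rewrite ji.
rewrite (bigD1 i) //= [in RHS](bigD1 i) //= inc_st_eq exprS -mulrA.
by congr (_ * (_ * _)); apply: eq_bigr => k /andP[_ ki]; rewrite inc_st_neq.
Qed.

Lemma low_weightS j (jK : (j < K)%N) n :
  low_weight j n = z (K - j)%N ^+ n (Ordinal jK) * low_weight j.+1 n.
Proof.
rewrite /low_weight (bigD1 (Ordinal jK)) //=; congr (_ * _).
by apply: eq_bigl => i; rewrite leq_eqVlt -val_eqE /=; case: ltngtP.
Qed.

Lemma low_weightK n : low_weight K n = 1.
Proof. by rewrite /low_weight big_pred0 // => i; rewrite leqNgt ltn_ord. Qed.

(* Some level <= j is nonempty, so the empty-state term of the balance equation
   vanishes and no departure from a level > j can lead to n. *)
Lemma balance_weighted j l n : queued_upto j n = l.+1 ->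
  (1 + sigma r K) * (p n * low_weight j n) =
    \sum_(i < K) r i.+1 * ((if (0 < n i)%N then p (dec_st n i) else 0) * low_weight j n)
  + \sum_(i < K) (if first_nonempty j i (inc_st n i)
                  then p (inc_st n i) * low_weight j n else 0).
Proof.
move=> nl.
have busy : [forall k : 'I_K, (k < j)%N ==> (n k == 0%N)] = false.
  by rewrite -queued_upto_eq0 nl.
have not_empty : [forall k : 'I_K, n k == 0%N] = false.
  by apply: contraFF busy => /forallP n0; apply/forallP => k; rewrite n0 implybT.
rewrite mulrA p_balance not_empty add0r mulr_suml -big_split /=; apply: eq_bigr => i _.
rewrite mulrDl -mulrA first_nonempty_inc; congr (_ + _).
case: ltnP => ij /=; first by case: ifP; rewrite ?mul0r.
case: ifP => [/forallP below|_]; last by rewrite mul0r.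
suff : [forall k : 'I_K, (k < j)%N ==> (n k == 0%N)] by rewrite busy.
by apply/forallP => k; apply/implyP => kj; apply: (implyP (below k)); apply: leq_trans ij.
Qed.

(* An arrival at level i+1 moves the state from n - e_i to n. *)
Lemma esum_arrivals j l i : (0 < j)%N ->
  (\esum_(n in [set n | queued_upto j n = l.+1])
     ((if (0 < n i)%N then p (dec_st n i) else 0) * low_weight j n)%:E)%E
  = (if (i < j)%N then H j l else (z (K - i)%N)%:E * H j l.+1)%E.
Proof.
move=> j0; pose l' := if (i < j)%N then l else l.+1.
have bij : set_bij [set m | queued_upto j m = l']
    ([set n | queued_upto j n = l.+1] `&` [set n | (0 < n i)%N]) (fun m => inc_st m i).
  apply: inc_st_bij => [m /= ml|n [/= nl ni]]; split => //=.
  - by rewrite queued_upto_inc ml /l'; case: ltnP; rewrite ?addn1 ?addn0.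
  - by rewrite inc_st_eq.
  - by rewrite queued_upto_dec // nl /l'; case: ltnP; rewrite ?subn1 ?subn0.
have inc_term m :
    ((if (0 < inc_st m i i)%N then p (dec_st (inc_st m i) i) else 0)
     * low_weight j (inc_st m i))%:E
    = ((if (j <= i)%N then z (K - i)%N else 1)%:E * weighted_prob j m)%E.
  by rewrite inc_st_eq inc_stK low_weight_inc -EFinM mulrCA.
rewrite -(esum_setI_supp (J := [set n : state K | (0 < n i)%N])).
  2: by move=> n _ /negP/negbTE ->; rewrite mul0r.
rewrite (reindex_esum _ _ _ _ bij) (eq_esum (fun m _ => inc_term m)) esumZl; first last.
- by move=> m; apply: weighted_prob_ge0.
- case: ifP => ji; last exact: ler01.
  by have /andP[] : 0 <= z (K - i)%N <= 1 by apply: (@z_low_bounds j); rewrite j0.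
by rewrite /l' /H; case: ltnP => ij; rewrite ?mul1e.
Qed.

(* A service completion at the first nonempty level i+1 moves the state from
   n + e_i to n. *)
Lemma esum_departures j l i :
  (\esum_(n in [set n | queued_upto j n = l.+1])
     (if first_nonempty j i (inc_st n i) then p (inc_st n i) * low_weight j n else 0)%:E)%E
  = (\esum_(m in [set m | queued_upto j m = l.+2])
       (if first_nonempty j i m then weighted_prob j m else 0))%E.
Proof.
case: (ltnP i j) => ij; last first.
  by rewrite !esum1 // => n _; rewrite /first_nonempty ltnNge ij.
have bij : set_bij [set n | queued_upto j n = l.+1]
    ([set m | queued_upto j m = l.+2] `&` [set m | (0 < m i)%N]) (fun n => inc_st n i).
  apply: inc_st_bij => [n /= nl|m [/= ml mi]]; split => //=.
  - by rewrite queued_upto_inc nl ij addn1.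
  - by rewrite inc_st_eq.
  - by rewrite queued_upto_dec // ml ij subn1.
rewrite -[in RHS](esum_setI_supp (J := [set m : state K | (0 < m i)%N])).
  2: by move=> m _ /negP mi; rewrite /first_nonempty (negbTE mi) andbF.
rewrite (reindex_esum _ _ _ _ bij); apply: eq_esum => n _.
by rewrite /weighted_prob low_weight_inc leqNgt ij mul1r; case: ifP.
Qed.

Lemma sum_departures j l : (0 < j)%N ->
  (\sum_(i < K) \esum_(m in [set m | queued_upto j m = l.+2])
     (if first_nonempty j i m then weighted_prob j m else 0))%E = H j l.+2.
Proof.
move=> j0; rewrite -esum_sum => [|m i _ _]; last first.
  by case: ifP => // _; apply: weighted_prob_ge0.
apply: eq_esum => m /= ml.
have [i0 first_i0] : exists i0, forall i, first_nonempty j i m = (i == i0).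
  by apply: first_nonempty_unique; rewrite ml.
under eq_bigr do rewrite first_i0.
by rewrite -big_mkcond big_pred1_eq.
Qed.

Lemma H_rec j l : (0 < j)%N ->
  ((1 + sigma r K)%:E * H j l.+1 =
   \sum_(i < K) (r i.+1)%:E * (if (i < j)%N then H j l else (z (K - i)%N)%:E * H j l.+1)
   + H j l.+2)%E.
Proof.
move=> j0.
have sigma_ge0 : 0 <= 1 + sigma r K.
  by rewrite sigmaE addr_ge0 //; apply: sumr_ge0 => i _; apply: r_ge0.
have arrival_ge0 (n : state K) (i : 'I_K) :
    0 <= (if (0 < n i)%N then p (dec_st n i) else 0) * low_weight j n.
  by rewrite mulr_ge0 ?low_weight_ge0 //; case: ifP.
have departure_ge0 (n : state K) (i : 'I_K) :
    0 <= if first_nonempty j i (inc_st n i) then p (inc_st n i) * low_weight j n else 0.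
  by case: ifP => // _; rewrite mulr_ge0 ?low_weight_ge0.
rewrite {1}/H -esumZl //; last by move=> n; apply: weighted_prob_ge0.
under eq_esum => n /= nl do
  rewrite /weighted_prob -EFinM (balance_weighted nl) EFinD -!sumEFin.
rewrite esumD => [|n _|n _]; last 2 first.
- by apply: sume_ge0 => i _; rewrite lee_fin mulr_ge0 ?r_ge0.
- by apply: sume_ge0 => i _; rewrite lee_fin.
rewrite esum_sum => [|n i _ _]; last by rewrite lee_fin mulr_ge0 ?r_ge0.
rewrite esum_sum => [|n i _ _]; last by rewrite lee_fin.
rewrite (eq_bigr _ (fun i _ => esum_departures j l i)) sum_departures //.
congr (_ + _); apply: eq_bigr => i _; under eq_esum do rewrite EFinM.
by rewrite esumZl ?r_ge0 ?esum_arrivals // => n; rewrite lee_fin.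
Qed.

Lemma sigma_ge0 j : (j <= K)%N -> 0 <= sigma r j.
Proof.
move=> jK; rewrite sigmaE; apply: sumr_ge0 => i _.
by apply/ltW/r_gt0/andP; split => //; exact: leq_trans (ltn_ord i) jK.
Qed.

Lemma beta_ge0 j : (1 <= j <= K)%N -> 0 <= beta K r z (K - j).
Proof.
case/andP => j0 jK; rewrite betaE // big_nat_cond.
apply: sumr_ge0 => i /andP[/andP[ji iK] _]; apply: mulr_ge0.
  by have /andP[] : 0 <= z (K - i)%N <= 1 by apply: z_bounds; lia.
by apply/ltW/r_gt0; lia.
Qed.

Lemma sigma_beta_le j : (1 <= j <= K)%N ->
  sigma r j + beta K r z (K - j) <= sigma r K.
Proof.
case/andP => j0 jK.
rewrite -[sigma r j]mulr1 -[beta _ _ _ _]mulr1 -sum_levels_split // sigmaE.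
apply: ler_sum => i _; rewrite -[leRHS]mulr1; apply: ler_wpM2l; first exact: r_ge0.
case: ltnP => // ji; rewrite mulr1.
by have /andP[] : 0 <= z (K - i)%N <= 1 by apply: (@z_low_bounds j); rewrite j0.
Qed.

Lemma h_rec j l : (1 <= j <= K)%N ->
  h j l.+2 = (1 + sigma r K - beta K r z (K - j)) * h j l.+1 - sigma r j * h j l.
Proof.
case/andP => j0 jK; have := H_rec l j0; rewrite !H_fin //.
rewrite (eq_bigr (fun i : 'I_K => (r i.+1 * (if (i < j)%N then h j l
    else z (K - i)%N * h j l.+1))%:E)) => [|i _]; last by case: ifP.
rewrite sumEFin sum_levels_split // -EFinM -EFinD => -[rec].
by apply: (addIr ((1 + sigma r K) * h j l.+1)); rewrite [in RHS]rec; ring.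
Qed.

Lemma zeta_minusE j : (j <= K)%N -> zeta_minus K r z (K - j) =
  small_root (1 + sigma r K - beta K r z (K - j)) (sigma r j).
Proof. by move=> jK; rewrite /zeta_minus subKn. Qed.

Lemma zeta_minus_bounds j : (1 <= j <= K)%N ->
  0 <= zeta_minus K r z (K - j) <= sigma r j.
Proof.
move=> jK; have := sigma_beta_le jK; have /andP[_ jK'] := jK.
rewrite zeta_minusE // => gap; apply: small_root_bounds; first exact: sigma_ge0.
lra.
Qed.

Lemma h_geometric j m : (1 <= j <= K)%N ->
  h j m = h j 0%N * zeta_minus K r z (K - j) ^+ m.
Proof.
move=> jK; have := sigma_beta_le jK; have /andP[j0 jK'] := jK.
have s0 := sigma_ge0 jK'; rewrite zeta_minusE // => gap.
have gap' : 1 + sigma r j <= 1 + sigma r K - beta K r z (K - j) by lra.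
set a := 1 + sigma r K - beta K r z (K - j) in gap' *.
apply: (linrec2_bounded_geometric (v := large_root a (sigma r j)) (B := 1)).
- by case/andP: (small_root_bounds s0 gap').
- exact: large_root_ge1.
- by move=> n; apply: h_ge0.
- by move=> N; apply: sum_h_le1.
- by move=> n; rewrite small_rootD small_rootM // h_rec.
Qed.

Lemma zeta_minus_scaled j y : (1 <= j <= K)%N -> 0 <= y <= 1 ->
  0 <= y * zeta_minus K r z (K - j) < 1.
Proof.
move=> jK /andP[y0 y1]; have /andP[zeta0 zeta_le] := zeta_minus_bounds jK.
rewrite mulr_ge0 //=; have := sigma_beta_le jK; have := beta_ge0 jK; have := sigma_lt1.
have : y * zeta_minus K r z (K - j) <= 1 * sigma r j by apply: ler_pM.
lra.
Qed.

Lemma series_H j y : (0 < j)%N -> 0 <= y ->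
  (\sum_(m <oo) ((y ^+ m)%:E * H j m) =
   \esum_(n in [set: state K]) ((y ^+ queued_upto j n)%:E * weighted_prob j n))%E.
Proof.
move=> j0 y0; rewrite (esum_fibersT (queued_upto j)) => [|n]; last first.
  by apply: mule_ge0; [rewrite lee_fin exprn_ge0 | apply: weighted_prob_ge0].
apply: eq_eseriesr => m _; rewrite /H -esumZl ?exprn_ge0 // => [|n].
  by apply: eq_esum => n /= ->.
exact: weighted_prob_ge0.
Qed.

(* Both sides sum p n z_(K-j)^(n_1 + ... + n_(j+1)) over all states, with
   the same weights for the lower levels. *)
Lemma series_H_succ j (jK : (j < K)%N) : (0 < j)%N ->
  (\sum_(m <oo) ((z (K - j)%N ^+ m)%:E * H j m) =
   \sum_(m <oo) ((z (K - j)%N ^+ m)%:E * H j.+1 m))%E.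
Proof.
move=> j0; have /andP[y0 _] : 0 <= z (K - j)%N <= 1 by apply: z_bounds; lia.
rewrite !series_H //; apply: eq_esum => n _.
by rewrite /weighted_prob -!EFinM queued_uptoS exprD (low_weightS jK); congr (_%:E); ring.
Qed.

Lemma series_H_geometric j y : (1 <= j <= K)%N -> 0 <= y <= 1 ->
  (\sum_(m <oo) ((y ^+ m)%:E * H j m) =
   (h j 0%N / (1 - y * zeta_minus K r z (K - j)))%:E)%E.
Proof.
move=> jK y01; have /andP[j0 _] := jK.
rewrite -eseries_geometric ?zeta_minus_scaled //; apply: eq_eseriesr => m _.
by rewrite H_fin // (h_geometric m jK) -EFinM [in RHS]exprMn mulrCA.
Qed.

Lemma H_K0 : H K 0 = (p [ffun => 0%N])%:E.
Proof.
rewrite /H (_ : [set n | queued_upto K n = 0%N] = [set [ffun => 0%N]]).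
  by rewrite esum_set1 ?weighted_prob_ge0 // /weighted_prob low_weightK mulr1.
apply/seteqP; split => n /=; last first.
  by move=> ->; apply/eqP; rewrite queued_upto_eq0; apply/forallP => k; rewrite ffunE implybT.
move/eqP; rewrite queued_upto_eq0 => /forallP n0; apply/ffunP => i.
by rewrite ffunE; apply/eqP; have := n0 i; rewrite ltn_ord.
Qed.

Lemma zeta_minus0 : zeta_minus K r z 0 = sigma r K.
Proof.
have s0 := sigma_ge0 (leqnn K); have s1 := sigma_lt1.
rewrite /zeta_minus /beta big_geq // subr0 subn0.
rewrite (_ : _ ^+ 2 - _ = (1 - sigma r K) ^+ 2); last by ring.
by rewrite sqrtr_sqr ger0_norm; [field | lra].
Qed.

Lemma h_K0 : h K 0 = 1 - sigma r K.
Proof.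
have KK : (1 <= K <= K)%N by rewrite leqnn andbT.
have := series_H_geometric KK (_ : 0 <= 1 <= 1); rewrite lexx ler01 => /(_ isT).
rewrite subnn zeta_minus0 mul1r series_H // (eq_esum (b := fun n => (p n)%:E)) => [|n _].
  rewrite p_sum1 => -[total].
  have nz : 1 - sigma r K != 0 by rewrite subr_eq0 gt_eqF.
  by rewrite -[h K 0](divfK nz) -total mul1r.
by rewrite /weighted_prob low_weightK expr1n mul1e mulr1.
Qed.

Lemma h_succ j (jK : (j < K)%N) : (0 < j)%N ->
  h j 0 = h j.+1 0 * (1 - z (K - j)%N * zeta_minus K r z (K - j))
                   / (1 - z (K - j)%N * zeta_minus K r z (K - j.+1)).
Proof.
move=> j0; have y01 : 0 <= z (K - j)%N <= 1 by apply: z_bounds; lia.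
have jK1 : (1 <= j <= K)%N by rewrite j0 ltnW.
have jK2 : (1 <= j.+1 <= K)%N by rewrite jK.
have := series_H_succ jK j0.
rewrite (series_H_geometric jK1 y01) (series_H_geometric jK2 y01) => -[eq_series].
have /andP[_ d1] := zeta_minus_scaled jK1 y01.
have nz : 1 - z (K - j)%N * zeta_minus K r z (K - j) != 0 by rewrite subr_eq0 gt_eqF.
by rewrite -[h j 0](divfK nz) eq_series mulrAC.
Qed.

Lemma h_prod m : (m < K)%N ->
  h (K - m) 0 = (1 - sigma r K) * \prod_(1 <= k < m.+1)
    ((1 - z k * zeta_minus K r z k) / (1 - z k * zeta_minus K r z k.-1)).
Proof.
elim: m => [|m IH] mK; first by rewrite subn0 h_K0 big_geq // mulr1.
have jK : (K - m.+1 < K)%N by lia.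
rewrite (h_succ jK); last by lia.
have -> : (K - m.+1).+1 = (K - m)%N by lia.
have -> : (K - (K - m.+1))%N = m.+1 by lia.
have -> : (K - (K - m))%N = m by lia.
by rewrite IH ?(ltnW mK) // [in RHS]big_nat_recr //=; ring.
Qed.

Lemma G_H ell : G z p ell = H 1 ell.
Proof.
rewrite /G /H /weighted_prob /low_weight; congr esum; apply/seteqP.
have first_level n : queued_upto 1 n = n (Ordinal K_gt0).
  rewrite /queued_upto (big_pred1 (Ordinal K_gt0)) // => i.
  by rewrite ltnS leqn0 /= -val_eqE.
split => n /=; rewrite first_level; first exact.
by move=> <- i i0; congr (n _); apply: val_inj.
Qed.

Lemma G_formula ell : G z p ell =
  ((1 - sigma r K) * zeta_minus K r z K.-1 ^+ ell
   * \prod_(1 <= kappa < K)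
       ((1 - z kappa * zeta_minus K r z kappa)
        / (1 - z kappa * zeta_minus K r z kappa.-1)))%:E.
Proof.
have K1 : (1 <= 1 <= K)%N by rewrite K_gt0.
have KK : (K.-1 < K)%N by rewrite prednK.
rewrite G_H H_fin // (h_geometric ell K1) subn1.
have := h_prod KK; rewrite prednK // (_ : (K - K.-1)%N = 1%N) => [->|]; last by lia.
by rewrite mulrAC.
Qed.

Lemma p_empty : p [ffun => 0%N] = 1 - sigma r K.
Proof. by rewrite -h_K0 /h H_K0. Qed.

Lemma denominator_gt0 kappa : (1 <= kappa <= K.-1)%N ->
  0 < 1 - z kappa * zeta_minus K r z kappa.-1.
Proof.
move=> kK; have jK : (1 <= K - kappa.-1 <= K)%N by lia.
have := zeta_minus_scaled jK (z_bounds kK).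
by rewrite (_ : (K - (K - kappa.-1))%N = kappa.-1) ?subr_gt0 => [/andP[]|]; last lia.
Qed.

End Queue.

Theorem mainTheorem1 (R : realType) (K : nat) (r : nat -> R) (p : state K -> R) :
  (2 <= K)%N ->
  (forall k : nat, (1 <= k <= K)%N -> 0 < r k) ->
  sigma r K < 1 ->
  (forall n : state K, 0 <= p n) ->
  (\esum_(n in [set: state K]) (p n)%:E)%E = 1%E ->
  balance r p ->
  forall (ell : nat) (z : nat -> R),
    (forall k : nat, (1 <= k <= K.-1)%N -> 0 <= z k <= 1) ->
    [/\ G z p ell =
          ((1 - sigma r K) * zeta_minus K r z K.-1 ^+ ell
           * \prod_(1 <= kappa < K)
               ((1 - z kappa * zeta_minus K r z kappa)
                / (1 - z kappa * zeta_minus K r z kappa.-1)))%:E,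
        (forall kappa : nat, (1 <= kappa <= K.-1)%N ->
           0 < 1 - z kappa * zeta_minus K r z kappa.-1),
        p [ffun => 0%N] = 1 - sigma r K,
        G (fun _ => 0) p 0 = (p [ffun => 0%N])%:E &
        G z p ell = (G z p 0 * (zeta_minus K r z K.-1 ^+ ell)%:E)%E].
Proof.
move=> K2 r_gt0 sigma_lt1 p_ge0 p_sum1 p_bal ell z z_bounds.
have K_gt0 : (0 < K)%N by apply: ltnW.
have z0_bounds k : (1 <= k <= K.-1)%N -> 0 <= (fun=> 0 : R) k <= 1.
  by rewrite lexx ler01.
have G_z := G_formula K_gt0 r_gt0 sigma_lt1 p_ge0 p_sum1 p_bal z_bounds.
have G_0 := G_formula K_gt0 r_gt0 sigma_lt1 p_ge0 p_sum1 p_bal z0_bounds 0.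
have p_0 := p_empty K_gt0 r_gt0 sigma_lt1 p_ge0 p_sum1 p_bal z_bounds.
split => //; first exact: denominator_gt0.
- by rewrite G_0 p_0 mulr1 big1 ?mulr1 // => k _; rewrite !mul0r subr0 divr1.
- by rewrite !G_z expr0 mulr1 -EFinM mulrAC.
Qed.
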